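(* Let $m \geq 5$ be an odd integer. The digraph $H_{2m}$ admits a $\vec{C}_m$-factorization (in fact one consisting of four $\vec{C}_m$-factors).
   Context: $H_{2m} = \vec{X}(m,\{\pm 1\}) \wr \overline{K}_2$ is the digraph with vertex set $\{x_a, y_a : a \in \mathbb{Z}_m\}$ whose arcs are exactly $(u_a, v_b)$ for all $u, v \in \{x, y\}$ and all $a, b \in \mathbb{Z}_m$ with $b - a \equiv \pm 1 \pmod m$. (Here $\vec{X}(m,D)$ is the directed circulant on $\mathbb{Z}_m$ with arcs $(a,b)$ whenever $b-a \in D$ modulo $m$, $\overline{K}_2$ is the empty graph on two vertices $\{x,y\}$, and the wreath product $G \wr H$ has vertex set $V(G)\times V(H)$ with an arc from $(g_1,h_1)$ to $(g_2,h_2)$ iff $(g_1,g_2)\in A(G)$, or $g_1=g_2$ and $(h_1,h_2)\in A(H)$; we write $x_a=(a,x)$, $y_a=(a,y)$.) A $\vec{C}_m$-factor of a digraph is a spanning subdigraph that is a disjoint union of directed $m$-cycles; a $\vec{C}_m$-factorization is a partition of the arc set into $\vec{C}_m$-factors. *)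

From mathcomp Require Import all_boot.
Set Implicit Arguments. Unset Strict Implicit. Unset Printing Implicit Defensive.

(* Vertices of H_{2m}: pairs (a, u) with a : 'I_m (standing for Z_m) and
   u : bool, where false = x and true = y; so x_a = (a, false), y_a = (a, true). *)
Definition vert (m : nat) : finType := ('I_m * bool)%type.

Definition H_arc (m : nat) (p q : vert m) : bool :=
  ((p.1 + 1) %% m == q.1) || ((q.1 + 1) %% m == p.1).

Definition H_arcs (m : nat) : {set vert m * vert m} :=
  [set e | H_arc e.1 e.2].

(* A set F of arcs of a digraph on a finite vertex type V is a directed
   m-cycle factor (a spanning subdigraph that is a disjoint union of directed
   m-cycles) iff there is a successor map s : V -> V, injective (so every
   vertex has in- and out-degree 1 in F), whose arcs are exactly F, and every
   vertex lies on an s-cycle of length exactly m. *)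
Definition Cm_factor (V : finType) (m : nat) (F : {set V * V}) : Prop :=
  exists s : V -> V,
    [/\ injective s,
        F = [set e | s e.1 == e.2] &
        forall v : V, order s v = m].

Definition Cm_factorization (V : finType) (m k : nat) (A : {set V * V})
    (Fs : 'I_k -> {set V * V}) : Prop :=
  [/\ forall i, Cm_factor m (Fs i),
      forall i j, i != j -> [disjoint Fs i & Fs j] &
      \bigcup_(i < k) Fs i = A].

From mathcomp Require Import all_boot zify.
Set Implicit Arguments. Unset Strict Implicit. Unset Printing Implicit Defensive.

(* A labelling f : Z_m -> bool selects one vertex (a, f a) on
   every level a of H_2m.  The "walk" along f moves every selected vertex one
   level forward to the selected vertex of the next level, and every
   unselected vertex one level backward to the unselected vertex of the
   previous level.  This is a permutation of the vertices with exactly two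
   orbits, both directed m-cycles, and all its arcs are arcs of H_2m; hence it
   is a C_m-factor.
   The forward arcs between the levels a and a+1 are the four arcs
   (a,u) -> (a+1,v) and the walk along f uses the one with
   (u,v) = (f a, f (a+1)); the backward arcs between these levels are used
   symmetrically.  So k labellings give a C_m-factorization as soon as, on
   every level a, the pairs (f_i a, f_i (a+1)) run bijectively over
   bool * bool (and m > 2, so that forward and backward arcs differ).
   For odd m we exhibit four such labellings. *)

Section FirstReturn.

Variables (T : finType) (f : T -> T).
Hypothesis f_inj : injective f.

Lemma iter_neq_before_order x k : 0 < k < order f x -> iter k f x != x.
Proof.
case/andP=> k_gt0 lt_k_ord; apply: contraTneq k_gt0 => fkx.
by rewrite -(findex_iter lt_k_ord) fkx findex0.
Qed.

Lemma order_first_return x n :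
  0 < n -> iter n f x = x -> (forall k, 0 < k < n -> iter k f x != x) ->
  order f x = n.
Proof.
move=> n_gt0 fnx first_return.
have [lt_ord_n | lt_n_ord //|//] := ltngtP (order f x) n.
  have := first_return (order f x).
  by rewrite order_gt0 lt_ord_n iter_order // eqxx => /(_ isT).
have := @iter_neq_before_order x n.
by rewrite n_gt0 lt_n_ord fnx eqxx => /(_ isT).
Qed.

End FirstReturn.

Lemma order_conj (T U : finType) (f : T -> T) (g : U -> U) (h : T -> U) x :
  injective f -> injective g -> injective h ->
  (forall y, g (h y) = h (f y)) -> order g (h x) = order f x.
Proof.
move=> f_inj g_inj h_inj gh_hf.
have iter_conj k : iter k g (h x) = h (iter k f x).
  by elim: k => // k IHk; rewrite !iterS IHk gh_hf.
apply: (order_first_return g_inj) => [||k k_range]; first exact: order_gt0.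
  by rewrite iter_conj iter_order.
by rewrite iter_conj (inj_eq h_inj) iter_neq_before_order.
Qed.

Lemma iter_can (T : Type) (f g : T -> T) k :
  cancel f g -> cancel (iter k f) (iter k g).
Proof. by move=> fK; elim: k => // k IHk x; rewrite iterSr iterS fK IHk. Qed.

Section CyclicSuccessor.

Variable m : nat.

Lemma val_iter_ordS (a : 'I_m) k : val (iter k (@ordS m) a) = (a + k) %% m.
Proof.
elim: k => [|k IHk] /=; first by rewrite addn0 modn_small.
by rewrite IHk -addn1 modnDml addn1 addnS.
Qed.

Lemma iter_ordS_id (a : 'I_m) k : (iter k (@ordS m) a == a) = (m %| k).
Proof.
rewrite -val_eqE val_iter_ordS -[X in _ == X](modn_small (ltn_ord a)).
by rewrite -[X in _ == X %% _]addn0 eqn_modDl mod0n.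
Qed.

Lemma iter_ord_pred_id (a : 'I_m) k : (iter k (@ord_pred m) a == a) = (m %| k).
Proof.
have iter_ordS_inj := can_inj (iter_can k (@ordSK m)).
rewrite -(inj_eq iter_ordS_inj) iter_can; last exact: ord_predK.
by rewrite eq_sym iter_ordS_id.
Qed.

Lemma order_Zm_rotation (s : 'I_m -> 'I_m) (a : 'I_m) :
  injective s -> (forall k, (iter k s a == a) = (m %| k)) -> order s a = m.
Proof.
have m_gt0 : 0 < m by apply: leq_ltn_trans (ltn_ord a).
move=> s_inj s_return; apply: order_first_return => //.
  by apply/eqP; rewrite s_return dvdnn.
move=> k /andP[k_gt0 lt_k_m]; rewrite s_return.
by apply: contraTN lt_k_m => /(dvdn_leq k_gt0); rewrite leqNgt.
Qed.

Lemma order_ordS (a : 'I_m) : order (@ordS m) a = m.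
Proof. exact: order_Zm_rotation (@ordS_inj m) (iter_ordS_id a). Qed.

Lemma order_ord_pred (a : 'I_m) : order (@ord_pred m) a = m.
Proof. exact: order_Zm_rotation (@ord_pred_inj m) (iter_ord_pred_id a). Qed.

Lemma ordS_neq_ord_pred (a : 'I_m) : 2 < m -> ordS a != ord_pred a.
Proof.
move=> m_gt2; apply: contraTneq m_gt2 => succ_eq_pred.
have : iter 2 (@ordS m) a == a by rewrite /= succ_eq_pred ord_predK.
by rewrite iter_ordS_id => /(dvdn_leq (isT : 0 < 2)); rewrite leqNgt.
Qed.

End CyclicSuccessor.

Lemma H_arcE m (p q : vert m) :
  H_arc p q = (ordS p.1 == q.1) || (ordS q.1 == p.1).
Proof. by rewrite /H_arc -!val_eqE /= !addn1. Qed.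

Section Walk.

Variables (m : nat) (f : 'I_m -> bool).

Definition walk (p : vert m) : vert m :=
  if p.2 == f p.1 then (ordS p.1, f (ordS p.1))
  else (ord_pred p.1, ~~ f (ord_pred p.1)).

Definition walk_arcs : {set vert m * vert m} := [set e | walk e.1 == e.2].

Lemma walk_forward a : walk (a, f a) = (ordS a, f (ordS a)).
Proof. by rewrite /walk eqxx. Qed.

Lemma walk_backward a : walk (a, ~~ f a) = (ord_pred a, ~~ f (ord_pred a)).
Proof. by rewrite /walk /=; case: (f a). Qed.

Lemma selected_or_not a (u : bool) : u = f a \/ u = ~~ f a.
Proof. by case: u; case: (f a); auto. Qed.

(* The walk is a permutation: forward and backward steps never collide. *)
Lemma walk_inj : injective walk.
Proof.
move=> [a u] [b v].
have [->|->] := selected_or_not a u; have [->|->] := selected_or_not b v;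
  rewrite ?walk_forward ?walk_backward => /pair_equal_spec[ab_eq f_eq].
- by rewrite (ordS_inj ab_eq).
- by move: f_eq; rewrite ab_eq; case: (f _).
- by move: f_eq; rewrite ab_eq; case: (f _).
- by rewrite (ord_pred_inj ab_eq).
Qed.

Lemma order_walk p : order walk p = m.
Proof.
case: p => a u; have [->|->] := selected_or_not a u.
  have selected_inj : injective (fun b => (b, f b)) by move=> b c [].
  rewrite (order_conj _ (@ordS_inj m) walk_inj selected_inj walk_forward).
  exact: order_ordS.
have unselected_inj : injective (fun b => (b, ~~ f b)) by move=> b c [].
rewrite (order_conj _ (@ord_pred_inj m) walk_inj unselected_inj walk_backward).
exact: order_ord_pred.
Qed.

Lemma walk_factor : Cm_factor m walk_arcs.
Proof. by exists walk; split; [exact: walk_inj | | exact: order_walk]. Qed.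

Lemma walk_arc p : H_arc p (walk p).
Proof.
rewrite H_arcE /walk; case: ifP => _ /=; first by rewrite eqxx.
by rewrite ord_predK eqxx orbT.
Qed.

Hypothesis m_gt2 : 2 < m.

Lemma walk_forward_arc a u v :
  (walk (a, u) == (ordS a, v)) = ((u, v) == (f a, f (ordS a))).
Proof.
have [->|->] := selected_or_not a u.
  by rewrite walk_forward !xpair_eqE !eqxx eq_sym.
rewrite walk_backward !xpair_eqE eq_sym (negPf (ordS_neq_ord_pred _ m_gt2)).
by case: (f a).
Qed.

Lemma walk_backward_arc a u v :
  (walk (ordS a, u) == (a, v)) = ((~~ v, ~~ u) == (f a, f (ordS a))).
Proof.
have [->|->] := selected_or_not (ordS a) u.
  rewrite walk_forward !xpair_eqE (canF_eq (@ordSK m)).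
  rewrite (negPf (ordS_neq_ord_pred _ m_gt2)).
  by case: (f (ordS a)); rewrite andbF.
by rewrite walk_backward ordSK !xpair_eqE negbK !eqxx andbT eqb_negLR eq_sym.
Qed.

End Walk.

Lemma H_arc_level m (p q : vert m) : 2 < m -> H_arc p q ->
  exists c : 'I_m, exists e : bool * bool,
    forall f, (walk f p == q) = (e == (f c, f (ordS c))).
Proof.
move=> m_gt2; case: p q => [a u] [b v]; rewrite H_arcE /= => /orP[] /eqP <-.
  by exists a, (u, v) => f; exact: walk_forward_arc.
by exists b, (~~ v, ~~ u) => f; exact: walk_backward_arc.
Qed.

Section Factorization.

Variables (m k : nat) (L : 'I_k -> 'I_m -> bool).
Hypothesis m_gt2 : 2 < m.
Hypothesis L_levels :
  forall a : 'I_m, bijective (fun i => (L i a, L i (ordS a))).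

(* Two walks never share an arc: the arc determines the label pair. *)
Lemma walks_disjoint i j :
  i != j -> [disjoint walk_arcs (L i) & walk_arcs (L j)].
Proof.
move=> neq_ij; rewrite disjoint_subset; apply/subsetP => -[p q].
rewrite !inE /= => walk_i; apply: contra neq_ij => walk_j.
have : H_arc p q by rewrite -(eqP walk_i) walk_arc.
case/(H_arc_level m_gt2) => c [e owner].
move: walk_i walk_j; rewrite !owner => /eqP e_i /eqP e_j.
by apply/eqP/(bij_inj (L_levels c)); rewrite /= -e_i -e_j.
Qed.

(* Every arc of H_2m is used by the walk whose labels realize its pair. *)
Lemma walks_cover : \bigcup_(i < k) walk_arcs (L i) = H_arcs m.
Proof.
apply/setP => -[p q]; rewrite /H_arcs inE /=.
apply/bigcupP/idP => [[i _]|arc_pq].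
  by rewrite inE /= => /eqP <-; exact: walk_arc.
have [c [e owner]] := H_arc_level m_gt2 arc_pq.
have [g _ gK] := L_levels c.
by exists (g e) => //; rewrite inE owner gK.
Qed.

Lemma walks_factorization :
  Cm_factorization m (H_arcs m) (fun i => walk_arcs (L i)).
Proof.
split; [move=> i; exact: walk_factor | exact: walks_disjoint |].
exact: walks_cover.
Qed.

End Factorization.

Definition odd_labels (m : nat) (i : 'I_4) (a : 'I_m) : bool :=
  match val i with
  | 0 => a.+1 < m
  | 1 => ~~ odd a
  | 2 => odd a || (a.+1 == m)
  | _ => false
  end.

(* For odd m > 2 they realize the four label pairs on every level a, a+1:
   the level types are interior, next-to-last (odd) and last (even). *)
Lemma odd_labels_inj m (a : 'I_m) : odd m -> 2 < m ->
  injective (fun i => (odd_labels i a, odd_labels i (ordS a))).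
Proof.
move=> m_odd m_gt2 i j; rewrite /odd_labels /=.
have [a1_lt|a1_gt|a1_eq] := ltngtP a.+1 m.
- rewrite modn_small //=; have [a2_lt|a2_gt|a2_eq] := ltngtP a.+2 m.
  + by case: (odd a); case: i j => [[|[|[|[|?]]]] ?] [[|[|[|[|?]]]] ?] //=
      /eqP // _; apply: val_inj.
  + by lia.
  + have /= : odd a.+2 by rewrite a2_eq.
    rewrite negbK => ->.
    by case: i j => [[|[|[|[|?]]]] ?] [[|[|[|[|?]]]] ?] //= /eqP // _;
      apply: val_inj.
- by have := ltn_ord a; lia.
have /= /negbTE a_even : odd a.+1 by rewrite a1_eq.
rewrite a1_eq modnn a_even (ltnW m_gt2) (ltn_eqF (ltnW m_gt2)).
by case: i j => [[|[|[|[|?]]]] ?] [[|[|[|[|?]]]] ?] //= /eqP // _;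
  apply: val_inj.
Qed.

(* By counting, injectivity on the four pairs is bijectivity. *)
Lemma odd_labels_levels m (a : 'I_m) : odd m -> 2 < m ->
  bijective (fun i => (odd_labels i a, odd_labels i (ordS a))).
Proof.
move=> m_odd m_gt2; apply: inj_card_bij (odd_labels_inj m_odd m_gt2) _.
by rewrite card_prod card_bool card_ord.
Qed.

Theorem mainTheorem3 (m : nat) :
  5 <= m -> odd m ->
  exists Fs : 'I_4 -> {set vert m * vert m},
    Cm_factorization m (H_arcs m) Fs.
Proof.
move=> m_ge5 m_odd; have m_gt2 : 2 < m by apply: leq_trans m_ge5.
exists (fun i => walk_arcs (odd_labels i)); apply: walks_factorization => // a.
exact: odd_labels_levels.
Qed.
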